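(* Let $R=(r_n)_{n\in\mathbb{N}}$ be an enumerated countably infinite reference set with magnum $\theta_R\in\mathbf{Nn}$, and let $A,B$ be infinite subsets of $R$ with the orderings inherited from $R$. Then $m(B\mid A)=m(A\mid B)$.
   Context: $\mathbb{N}=\{1,2,3,\dots\}$, $\mathbb{N}_0=\mathbb{N}\cup\{0\}$. $\mathbf{No}$ denotes Conway's ordered field of surreal numbers, $\omega$ its first infinite element. An omnific integer is a surreal $x$ with $x=\{x-1\mid x+1\}$; $\mathbf{Nn}$ (surnatural numbers) is the class of nonnegative omnific integers. For $f,g:\mathbb{N}\to\mathbb{N}_0$, $f\overset{\to}{=}g$ means $f(n)=g(n)$ for all $n\ge N$ for some $N$; $f\overset{\to}{<}g$ means $f(n)<g(n)$ for all $n\ge N$ for some $N$. Axiom of Extension (standing assumption): every nondecreasing $f:\mathbb{N}\to\mathbb{N}_0$ has an extension $\hat f:\mathbf{Nn}\to\mathbf{Nn}$ with $\hat f(n)=f(n)$ for $n\in\mathbb{N}$, such that for nondecreasing $f,g$: $f\overset{\to}{=}g\Rightarrow\hat f(\nu)=\hat g(\nu)$ for all $\nu\in\mathbf{Nn}\setminus\mathbb{N}$; $f\overset{\to}{<}g\Rightarrow\hat f(\nu)<\hat g(\nu)$ for all $\nu\in\mathbf{Nn}\setminus\mathbb{N}$; and $\widehat{f+g}=\hat f+\hat g$, $\widehat{f\cdot g}=\hat f\cdot\hat g$, $\widehat{f\circ g}=\hat f\circ\hat g$ where defined. Relative counting: if $S=(s_n)_{n\in\mathbb{N}}$ is an infinite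 enumerated set and $T$ any set, $\chi_{T|S}(n)=1$ if $s_n\in T$ and $0$ otherwise, and $\kappa_{T|S}(n)=\sum_{k=1}^n\chi_{T|S}(k)$. Subsets of $R$ are enumerated in the order inherited from $R$. Set $\theta_A:=\hat{\kappa_{A|R}}(\theta_R)$ and $\theta_B:=\hat{\kappa_{B|R}}(\theta_R)$ (the magnums of $A$, $B$). The magnum of $B$ in $A$ is $m(B\mid A):=\hat{\kappa_{B|A}}(\theta_A)$, and $m(A\mid B):=\hat{\kappa_{A|B}}(\theta_B)$. *)

From Stdlib Require Import ClassicalEpsilon List.
From mathcomp Require Import all_boot.

Set Implicit Arguments.
Unset Strict Implicit.
Unset Printing Implicit Defensive.

(* Conventions: sequences indexed by N = {1,2,...} are modelled as functions
   [nat -> _]; the value at index 0 is junk and never used. *)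

Definition chi {T : Type} (s : nat -> T) (X : pred T) (k : nat) : nat :=
  nat_of_bool (X (s k)).

Definition kappa {T : Type} (s : nat -> T) (X : pred T) (n : nat) : nat :=
  \sum_(1 <= k < n.+1) chi s X k.

Definition enumerated {T : Type} (r : nat -> T) : Prop :=
  forall m n, 1 <= m -> 1 <= n -> r m = r n -> m = n.

Definition subset_of {T : Type} (r : nat -> T) (A : pred T) : Prop :=
  forall x, A x -> exists n, 1 <= n /\ r n = x.

Definition infinite_set {T : Type} (A : pred T) : Prop :=
  forall s : list T, exists x, A x /\ ~ List.In x s.

(* Index in R of the n-th element of A (order inherited from R):
   the unique k >= 1 with r_k in A and kappa_{A|R}(k) = n. *)
Definition sub_index {T : Type} (r : nat -> T) (A : pred T) (n : nat) : nat :=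
  epsilon (inhabits 0%N) (fun k => 1 <= k /\ A (r k) /\ kappa r A k = n).

Definition sub_enum {T : Type} (r : nat -> T) (A : pred T) : nat -> T :=
  fun n => r (sub_index r A n).

Definition nondecr (f : nat -> nat) : Prop :=
  forall m n, 1 <= m -> m <= n -> f m <= f n.

Definition ev_eq (f g : nat -> nat) : Prop :=
  exists N, forall n, N <= n -> f n = g n.

Definition ev_lt (f g : nat -> nat) : Prop :=
  exists N, forall n, N <= n -> f n < g n.

(* [ExtensionAxiom inj lt add mul hat]: [Nn] is the class of surnatural
   numbers, [inj : nat -> Nn] the canonical embedding of N_0, [lt], [add],
   [mul] the order and operations of Nn, and [hat f] the extension of a
   nondecreasing f : N -> N_0 to Nn -> Nn, as in the Axiom of Extension. *)
Definition not_finite {Nn : Type} (inj : nat -> Nn) (nu : Nn) : Prop :=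
  forall n, 1 <= n -> nu <> inj n.

Definition ExtensionAxiom {Nn : Type} (inj : nat -> Nn) (lt : Nn -> Nn -> Prop)
  (add mul : Nn -> Nn -> Nn) (hat : (nat -> nat) -> Nn -> Nn) : Prop :=
  (forall f, nondecr f -> forall n, 1 <= n -> hat f (inj n) = inj (f n)) /\
      (forall f g, nondecr f -> nondecr g -> ev_eq f g ->
         forall nu, not_finite inj nu -> hat f nu = hat g nu) /\
      (forall f g, nondecr f -> nondecr g -> ev_lt f g ->
         forall nu, not_finite inj nu -> lt (hat f nu) (hat g nu)) /\
      (forall f g, nondecr f -> nondecr g ->
         forall nu, hat (fun n => f n + g n) nu = add (hat f nu) (hat g nu)) /\
      (forall f g, nondecr f -> nondecr g ->
         forall nu, hat (fun n => f n * g n) nu = mul (hat f nu) (hat g nu)) /\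
      (* composition, where defined: g maps N into N *)
      (forall f g, nondecr f -> nondecr g -> (forall n, 1 <= n -> 1 <= g n) ->
         forall nu, hat (fun n => f (g n)) nu = hat f (hat g nu)).

Definition magnum {T Nn : Type} (hat : (nat -> nat) -> Nn -> Nn)
  (r : nat -> T) (thetaR : Nn) (A : pred T) : Nn :=
  hat (kappa r A) thetaR.

Definition magnum_in {T Nn : Type} (hat : (nat -> nat) -> Nn -> Nn)
  (r : nat -> T) (thetaR : Nn) (B A : pred T) : Nn :=
  hat (kappa (sub_enum r A) B) (magnum hat r thetaR A).

From Stdlib Require Import ClassicalEpsilon.
From mathcomp Require Import all_boot.

Set Implicit Arguments.
Unset Strict Implicit.
Unset Printing Implicit Defensive.

(* Both sides equal the magnum of A ∩ B.  Counting B along the enumeration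
   of A up to position kappa_{A|R}(n) counts exactly the elements of A ∩ B
   among r_1, ..., r_n, so kappa_{B|A} ∘ kappa_{A|R} = kappa_{A∩B|R}, and the
   composition rule of the Axiom of Extension turns this into
   m(B | A) = theta_{A∩B}, an expression symmetric in A and B. *)

Section Counting.

Context {T : Type} {s : nat -> T} {X : pred T}.

Lemma kappa0 : kappa s X 0 = 0.
Proof. by rewrite /kappa big_geq. Qed.

Lemma kappaS n : kappa s X n.+1 = kappa s X n + chi s X n.+1.
Proof. by rewrite /kappa big_nat_recr. Qed.

Lemma kappaS_in n : X (s n.+1) -> kappa s X n.+1 = (kappa s X n).+1.
Proof. by move=> Xn; rewrite kappaS /chi Xn addn1. Qed.

Lemma kappaS_notin n : ~~ X (s n.+1) -> kappa s X n.+1 = kappa s X n.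
Proof. by move/negbTE=> Xn; rewrite kappaS /chi Xn addn0. Qed.

Lemma leq_kappa m n : m <= n -> kappa s X m <= kappa s X n.
Proof.
elim: n => [|n IHn]; first by rewrite leqn0 => /eqP ->.
rewrite leq_eqVlt ltnS => /orP[/eqP -> // | /IHn le_mn].
by rewrite kappaS (leq_trans le_mn) ?leq_addr.
Qed.

Lemma kappa_nondecr : nondecr (kappa s X).
Proof. by move=> m n _; apply: leq_kappa. Qed.

Lemma ltn_kappa m n : 1 <= n -> X (s n) -> m < n -> kappa s X m < kappa s X n.
Proof.
case: n => // n _ Xn lt_mn.
by rewrite kappaS_in // ltnS leq_kappa.
Qed.

Lemma eq_kappa (Y : pred T) : X =1 Y -> kappa s X =1 kappa s Y.
Proof. by move=> eqXY n; apply: eq_bigr => k _; rewrite /chi eqXY. Qed.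

End Counting.

Section SubEnumeration.

Variables (T : Type) (r : nat -> T) (A : pred T).

Lemma sub_index_kappa k : 1 <= k -> A (r k) -> sub_index r A (kappa r A k) = k.
Proof.
move=> k_gt0 Ak; rewrite /sub_index.
set P := fun k' => _.
have : P (epsilon (inhabits 0) P) by apply: epsilon_spec; exists k.
move: (epsilon _ _) => k' [k'_gt0 [Ak' eq_kappa_k']].
case: (ltngtP k k') => // lt_kk'.
- by have := ltn_kappa (s := r) (X := A) k'_gt0 Ak' lt_kk'; rewrite eq_kappa_k' ltnn.
- by have := ltn_kappa (s := r) (X := A) k_gt0 Ak lt_kk'; rewrite eq_kappa_k' ltnn.
Qed.

Lemma kappa_sub_enum (B : pred T) n :
  kappa (sub_enum r A) B (kappa r A n) = kappa r (fun x => A x && B x) n.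
Proof.
elim: n => [|n IHn]; first by rewrite !kappa0.
have [An | nAn] := boolP (A (r n.+1)).
- rewrite (kappaS_in An) kappaS IHn [RHS]kappaS /chi /sub_enum.
  by rewrite -(kappaS_in An) sub_index_kappa // An.
- by rewrite kappaS_notin // kappaS_notin ?negb_and ?nAn.
Qed.

Lemma kappa_eventually_pos N : 1 <= N -> A (r N) ->
  forall n, N <= n -> 1 <= kappa r A n.
Proof.
move=> N_gt0 AN n le_Nn.
apply: leq_trans (leq_kappa (s := r) (X := A) le_Nn).
by have := ltn_kappa (s := r) (X := A) N_gt0 AN N_gt0; rewrite kappa0.
Qed.

End SubEnumeration.

Section Extension.

Variables (Nn : Type) (inj : nat -> Nn) (lt : Nn -> Nn -> Prop).
Variables (add mul : Nn -> Nn -> Nn) (hat : (nat -> nat) -> Nn -> Nn).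
Hypothesis ext : ExtensionAxiom inj lt add mul hat.

Lemma hat_eq_ev f g : nondecr f -> nondecr g -> ev_eq f g ->
  forall nu, not_finite inj nu -> hat f nu = hat g nu.
Proof. exact: ext.2.1. Qed.

(* The composition rule, for an inner function that maps N into N only
   eventually: replace it by [maxn 1 \o g], which agrees with it eventually. *)
Lemma hat_comp_ev f g N : {homo f : m n / m <= n} -> nondecr g ->
  (forall n, N <= n -> 1 <= g n) ->
  forall nu, not_finite inj nu -> hat (fun n => f (g n)) nu = hat f (hat g nu).
Proof.
move=> f_mono g_nd g_pos nu nu_inf.
have hat_comp := ext.2.2.2.2.2.
have f_nd : nondecr f by move=> m n _ /f_mono.
pose g1 n := maxn 1 (g n).
have g1_nd : nondecr g1.
  move=> m n m_gt0 le_mn; rewrite geq_max leq_maxl /=.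
  exact: leq_trans (g_nd _ _ m_gt0 le_mn) (leq_maxr _ _).
have g1_ev : forall n, N <= n -> g1 n = g n.
  by move=> n le_Nn; apply/maxn_idPr/g_pos.
rewrite (@hat_eq_ev g g1) //; last by exists N => n /g1_ev.
rewrite -hat_comp // => [|n _]; last exact: leq_maxl.
apply: hat_eq_ev => //; last by exists N => n /g1_ev ->.
- by move=> m n m_gt0 /(g_nd _ _ m_gt0) /f_mono.
- by move=> m n m_gt0 /(g1_nd _ _ m_gt0) /f_mono.
Qed.

Lemma magnum_in_meet (T : Type) (r : nat -> T) (A B : pred T) thetaR :
  not_finite inj thetaR -> (exists2 N, 1 <= N & A (r N)) ->
  magnum_in hat r thetaR B A = magnum hat r thetaR (fun x => A x && B x).
Proof.
move=> thetaR_inf [N N_gt0 AN]; rewrite /magnum_in /magnum.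
rewrite -(hat_comp_ev (@leq_kappa _ _ _) kappa_nondecr
            (kappa_eventually_pos N_gt0 AN)) //.
apply: hat_eq_ev => //; last by exists 0 => n _; apply: kappa_sub_enum.
- by move=> m n _ /(@leq_kappa _ r A) /leq_kappa.
- exact: kappa_nondecr.
Qed.

End Extension.

Lemma subset_of_index (T : Type) (r : nat -> T) (A : pred T) :
  subset_of r A -> infinite_set A -> exists2 N, 1 <= N & A (r N).
Proof.
move=> A_sub A_inf; have [x [Ax _]] := A_inf nil.
by have [N [N_gt0 rN]] := A_sub x Ax; exists N; rewrite // rN.
Qed.

Theorem theorem7p2 (T : Type) (r : nat -> T) (A B : pred T)
  (Nn : Type) (inj : nat -> Nn) (lt : Nn -> Nn -> Prop) (add mul : Nn -> Nn -> Nn)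
  (hat : (nat -> nat) -> Nn -> Nn) (thetaR : Nn) :
  ExtensionAxiom inj lt add mul hat ->
  enumerated r ->
  not_finite inj thetaR ->
  subset_of r A -> subset_of r B ->
  infinite_set A -> infinite_set B ->
  magnum_in hat r thetaR B A = magnum_in hat r thetaR A B.
Proof.
move=> ext _ thetaR_inf A_sub B_sub A_inf B_inf.
rewrite !(magnum_in_meet ext) //; try exact: subset_of_index.
apply: (hat_eq_ev ext) => //; try exact: kappa_nondecr.
by exists 0 => n _; apply: eq_kappa => x; apply: andbC.
Qed.
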